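(* Let $A\subset\mathbb T^2$ be a measurable set and $\Gamma_A:=\{\gamma\in\Gamma:\ \mathscr L^1(\{t\in[0,T]:\gamma(t)\in A\})>0\}$. Then $\mathscr L^2(A)=0$ if and only if $\eta(\Gamma_A)=0$.
   Context: $T>0$, $\mathbb T^2=\mathbb R^2/\mathbb Z^2$, $b\colon\mathbb T^2\to\mathbb R^2$ is a bounded, everywhere defined Borel vector field with $b\in\mathrm{BV}(\mathbb T^2)$, nearly incompressible with density $\rho$: $\ln\rho\in L^\infty((0,T)\times\mathbb T^2)$ and $\partial_t\rho+\mathrm{div}(\rho b)=0$ in $\mathscr D'((0,T)\times\mathbb T^2)$. $\Gamma:=C([0,T];\mathbb T^2)$, $e_t(\gamma)=\gamma(t)$. $\eta$ is a positive finite Borel measure on $\Gamma$, concentrated on curves with $\gamma(t)=\gamma(0)+\int_0^tb(\gamma(\tau))d\tau$, such that $(e_t)_\#\eta=\rho(t,\cdot)\mathscr L^2$ for every $t\in[0,T]$. *)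

From HB Require Import structures.
From mathcomp Require Import all_boot all_order all_algebra.
From mathcomp Require Import all_classical all_reals all_analysis.
Set Implicit Arguments. Unset Strict Implicit. Unset Printing Implicit Defensive.
Import Order.TTheory GRing.Theory Num.Theory.
Import numFieldNormedType.Exports.
Local Open Scope classical_set_scope.
Local Open Scope ring_scope.

Section Torus.
Variable R : realType.

(* The torus T^2 = R^2/Z^2 is represented by its fundamental domain
   Q = [0,1) x [0,1) inside R * R. *)
Definition Qdom : set (R * R) := `[0%R, 1%R[ `*` `[0%R, 1%R[.

Definition fracR (a : R) : R := a - (Num.floor a)%:~R.
Definition torus_proj (v : R * R) : R * R := (fracR v.1, fracR v.2).

Definition dist1 (a : R) : R := Num.min (fracR a) (1 - fracR a).
Definition tdist (x y : R * R) : R :=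
  Num.max (dist1 (x.1 - y.1)) (dist1 (x.2 - y.2)).

Definition leb2 := ((@lebesgue_measure R) \x (@lebesgue_measure R))%E.
Definition leb3 := ((@lebesgue_measure R) \x leb2)%E.

Fixpoint iter_dir (V : normedModType R) (f : V -> R) (vs : seq V) : V -> R :=
  if vs is v :: vs' then fun x => 'D_v (iter_dir f vs') x else f.
Definition smooth (V : normedModType R) (f : V -> R) : Prop :=
  forall vs : seq V, continuous (iter_dir f vs) /\
    forall (v x : V), derivable (iter_dir f vs) x v.

(* Z^2-periodic functions on R^2, i.e. functions on T^2 *)
Definition periodic2 (f : R * R -> R) : Prop :=
  forall x : R * R, f (x.1 + 1, x.2) = f x /\ f (x.1, x.2 + 1) = f x.

(* b in BV(T^2): finite total variation of the distributional derivative,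
   tested against smooth T^2-periodic 2x2 matrix fields phi with |phi| <= 1 *)
Definition BV_torus (b : R * R -> R * R) : Prop :=
  exists C : R, forall p11 p12 p21 p22 : R * R -> R,
    smooth p11 -> smooth p12 -> smooth p21 -> smooth p22 ->
    periodic2 p11 -> periodic2 p12 -> periodic2 p21 -> periodic2 p22 ->
    (forall x, p11 x ^+ 2 + p12 x ^+ 2 + p21 x ^+ 2 + p22 x ^+ 2 <= 1) ->
    (\int[leb2]_(x in Qdom)
       ((b x).1 * ('D_(1, 0) p11 x + 'D_(0, 1) p12 x)
      + (b x).2 * ('D_(1, 0) p21 x + 'D_(0, 1) p22 x))%:E <= C%:E)%E.

Definition test_fun (T : R) (phi : R * (R * R) -> R) : Prop :=
  smooth phi /\
  (forall t x, phi (t, (x.1 + 1, x.2)) = phi (t, x) /\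
               phi (t, (x.1, x.2 + 1)) = phi (t, x)) /\
  exists a c : R, 0 < a /\ c < T /\
    forall t x, (t < a \/ c < t) -> phi (t, x) = 0.

(* d_t rho + div(rho b) = 0 in D'((0,T) x T^2) *)
Definition continuity_eq (T : R) (b : R * R -> R * R)
    (rho : R * (R * R) -> R) : Prop :=
  forall phi, test_fun T phi ->
    (\int[leb3]_(z in `]0%R, T[ `*` Qdom)
      (rho z * ('D_(1, (0, 0)) phi z
               + (b z.2).1 * 'D_(0, (1, 0)) phi z
               + (b z.2).2 * 'D_(0, (0, 1)) phi z))%:E = 0)%E.

Definition ln_Linfty (T : R) (rho : R * (R * R) -> R) : Prop :=
  measurable_fun (`]0%R, T[ `*` Qdom) rho /\
  exists C : R, {ae leb3, forall z, (`]0%R, T[ `*` Qdom) z ->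
                  0 < rho z /\ `|ln (rho z)| <= C}.

(* continuous curves [0,T] -> T^2, represented as functions R -> Q that are
   constant outside [0,T] (so they are determined by their values on [0,T]) *)
Definition clampT (T t : R) : R := Num.max 0 (Num.min t T).
Definition curve_prop (T : R) (f : R -> R * R) : Prop :=
  (forall t, Qdom (f t)) /\ (forall t, f t = f (clampT T t)) /\
  (forall t (e : R), 0 < e -> exists2 d : R, 0 < d &
     forall s, `|s - t| < d -> tdist (f s) (f t) < e).

Lemma curve_prop_cst (T : R) : curve_prop T (fun=> (0, 0)).
Proof.
split; first by move=> t; split; rewrite /= in_itv /= lexx ltr01.
split=> // t e e0; exists 1 => // s _.
by rewrite /tdist /dist1 /fracR subrr floor0 /= subr0 ?minxx ?maxxx
  ?(le_lt_trans _ e0) // ge_min lexx.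
Qed.

Definition curve (T : R) := {f : R -> R * R | curve_prop T f}.
HB.instance Definition _ T := gen_eqMixin (curve T).
HB.instance Definition _ T := gen_choiceMixin (curve T).
HB.instance Definition _ T :=
  isPointed.Build (curve T) (exist _ (fun=> (0, 0)) (curve_prop_cst T)).

Definition ev (T : R) (t : R) (g : curve T) : R * R := sval g t.

(* Borel sigma-algebra of Gamma = C([0,T];T^2): generated by the e_t *)
Definition cyl_gen (T : R) : set (set (curve T)) :=
  [set @ev T t @^-1` B | t in `[0%R, T] & B in [set B : set (R * R) | measurable B]].
Definition Gamma (T : R) := g_sigma_algebraType (@cyl_gen T).

Definition integral_curve (T : R) (b : R * R -> R * R) (g : R -> R * R) :=
  forall t, 0 <= t <= T ->
    g t = torus_proj ((g 0).1 + Rintegral lebesgue_measure `[0%R, t] (fun tau => (b (g tau)).1),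
                      (g 0).2 + Rintegral lebesgue_measure `[0%R, t] (fun tau => (b (g tau)).2)).

Definition Gamma_A (T : R) (A : set (R * R)) : set (Gamma T) :=
  [set g | (0 < (@lebesgue_measure R) [set s : R | (0 <= s <= T)%R /\ A (ev s g)])%E].

End Torus.

From HB Require Import structures.
From mathcomp Require Import all_boot all_order all_algebra.
From mathcomp Require Import all_classical all_reals all_analysis.
From mathcomp Require Import lra measurable_realfun.
Set Implicit Arguments.
Unset Strict Implicit.
Unset Printing Implicit Defensive.
Import Order.TTheory GRing.Theory Num.Theory.
Import numFieldNormedType.Exports.
Local Open Scope classical_set_scope.
Local Open Scope ring_scope.

(* Tonelli's theorem for the indicator of S = {(t, g) : 0 <= t <= T, g(t) \in A}
   gives \int_Gamma L^1{t \in [0,T] : g(t) \in A} d eta(g) = \int_0^T eta(e_t^-1 A) dt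
   = \int_0^T \int_A rho(t, x) dx dt.  Hence eta(Gamma_A) = 0 iff \int_A rho(t, .)
   vanishes for a.e. t, and since rho(t, .) > 0 a.e. for a.e. t, this happens iff
   L^2(A) = 0.  S is measurable because (t, g) |-> g(t) is jointly measurable: by
   continuity of g, a coordinate of g(t) exceeds a iff at all rational times close
   to t it lies in a band [a + 1/k, 1 - 1/k] away from a and from the point where
   the torus wraps around. *)

Lemma dist1N {R : realType} (z : R) : dist1 (- z) = dist1 z.
Proof.
rewrite /dist1 /fracR.
have := floor_itv z; set f := Num.floor z => /andP[h1 h2].
rewrite intrD in h2.
have [e|ne] := eqVneq z f%:~R.
- have -> : Num.floor (- z) = - f by apply: floor_def; rewrite e mulrNz intrD; lra.
  by rewrite mulrNz e; congr Num.min; lra.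
- have -> : Num.floor (- z) = - f - 1.
    apply: floor_def.
    have : f%:~R < z by rewrite lt_def h1 andbT; apply: contra_neq ne => ->.
    rewrite intrD !intrB mulrNz; lra.
  by rewrite intrB mulrNz minC; congr Num.min; lra.
Qed.

Lemma ltr_norm_dist1 {R : realType} {x y e : R} : 0 < e ->
  0 <= x -> x < 1 -> e <= y -> y <= 1 - e -> dist1 (x - y) < e -> `|x - y| < e.
Proof.
move=> e0 x0 x1 ey ye; rewrite /dist1 /fracR.
have [d0|d0] := leP 0 (x - y).
- have -> : Num.floor (x - y) = 0.
    by apply: floor_def; rewrite d0 /= add0r rmorph1; lra.
  rewrite rmorph0 subr0 ger0_norm // gt_min => /orP[//|]; lra.
- have -> : Num.floor (x - y) = -1.
    by apply: floor_def; rewrite addNr /= rmorph0 mulrN1z d0 andbT; lra.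
  rewrite (_ : (-1)%:~R = -1 :> R) ?mulrN1z // ltr0_norm // gt_min => /orP[]; lra.
Qed.

Lemma natSinv_lt {R : realType} {e : R} : 0 < e -> exists k : nat, k.+1%:R^-1 < e.
Proof. by move=> /ltr_add_invr[k]; rewrite add0r; exists k. Qed.

Definition nth_rat (R : realType) (n : nat) : R := ratr (odflt 0 (pickle_inv n)).

Lemma nth_rat_dense {R : realType} (t : R) {e : R} : 0 < e ->
  exists n, `|nth_rat R n - t| < e.
Proof.
move=> e0.
have [s [ts [q _ qs]]] :=
  @dense_rat R (ball t e) (ex_intro _ t (ballxx t e0)) (ball_open _ _).
by exists (pickle q); rewrite /nth_rat pickleK_inv /= qs distrC.
Qed.

Section measurable_evaluation.
Variables (R : realType) (T : R).
Hypothesis T_gt0 : 0 < T.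

Lemma measurable_ev (t : R) : measurable_fun setT (@ev R T t : Gamma T -> R * R).
Proof.
move=> _ B mB; rewrite setTI; apply: sub_sigma_algebra.
exists (clampT T t).
  rewrite /= in_itv /= /clampT le_max lexx /= ge_max (ltW T_gt0) /=.
  by rewrite ge_min lexx orbT.
exists B => //; apply/seteqP; split => g /=; rewrite /ev;
  by have [_ [<- _]] := proj2_sig g.
Qed.

Section coordinate.
Variable p : R * R -> R.
Hypothesis p_measurable : measurable_fun setT p.
Hypothesis p_Qdom : forall x, Qdom x -> 0 <= p x /\ p x < 1.
Hypothesis p_dist1 : forall x y, dist1 (p x - p y) <= tdist x y.

Definition band (a : R) (k : nat) : set (R * R) :=
  [set x | Qdom x /\ a + k.+1%:R^-1 <= p x /\ p x <= 1 - k.+1%:R^-1].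

Lemma measurable_band a k : measurable (band a k).
Proof.
rewrite (_ : band a k = @Qdom R `&` (setT `&` p @^-1` `[a + k.+1%:R^-1, 1 - k.+1%:R^-1])).
  apply: measurableI; first by apply: measurableX; exact: measurable_itv.
  by apply: p_measurable => //; exact: measurable_itv.
by apply/seteqP; split => x /=; rewrite in_itv /=;
  [move=> [? /andP ?]| move=> [? [_ /andP ?]]].
Qed.

Lemma gt_coord_band (a t : R) (g : Gamma T) : 0 <= a -> a < p (ev t g) ->
  exists k m : nat, forall s, `|s - t| < m.+1%:R^-1 -> band a k (ev s g).
Proof.
have [gQ [_ g_cont]] := proj2_sig g; rewrite /ev.
move=> a0 ay; have [y0 y1] := p_Qdom (gQ t).
have [k] : exists k : nat, k.+1%:R^-1 < Num.min (p (sval g t) - a) (1 - p (sval g t)) / 2.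
  by apply: natSinv_lt; rewrite divr_gt0 // lt_min; apply/andP; split; lra.
set dl := k.+1%:R^-1 => hk.
have dl0 : 0 < dl by rewrite invr_gt0 ltr0Sn.
have [hk1 hk2] : dl < (p (sval g t) - a) / 2 /\ dl < (1 - p (sval g t)) / 2.
  have : Num.min (p (sval g t) - a) (1 - p (sval g t)) <= p (sval g t) - a.
    by rewrite ge_min lexx.
  have : Num.min (p (sval g t) - a) (1 - p (sval g t)) <= 1 - p (sval g t).
    by rewrite ge_min lexx orbT.
  lra.
have [d d0 hd] := g_cont t dl dl0.
have [m hm] := natSinv_lt d0.
exists k, m => s hs; split; first exact: gQ.
have [x0 x1] := p_Qdom (gQ s).
have [z1 z2] : dl <= p (sval g t) /\ p (sval g t) <= 1 - dl by split; lra.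
have := ltr_norm_dist1 dl0 x0 x1 z1 z2 (le_lt_trans (p_dist1 _ _) (hd _ (lt_trans hs hm))).
by rewrite ltr_norml -/dl => /andP[]; lra.
Qed.

Lemma band_gt_coord (a t : R) (g : Gamma T) (k m : nat) : 0 <= a ->
  (forall n, `|nth_rat R n - t| < m.+1%:R^-1 -> band a k (ev (nth_rat R n) g)) ->
  a < p (ev t g).
Proof.
have [gQ [_ g_cont]] := proj2_sig g; rewrite /ev.
move=> a0 hkm; pose dl : R := k.+1%:R^-1.
have dl0 : 0 < dl by rewrite invr_gt0 ltr0Sn.
have [d d0 hd] := g_cont t (dl / 2) ltac:(lra).
have im0 : 0 < (m.+1%:R : R)^-1 by rewrite invr_gt0 ltr0Sn.
have [n] := nth_rat_dense t (ltac:(by rewrite lt_min d0 im0) : 0 < Num.min d m.+1%:R^-1).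
rewrite lt_min => /andP[hn1 hn2].
have [_ [w1 w2]] := hkm n hn2; rewrite -/dl in w1 w2.
have [y0 y1] := p_Qdom (gQ t).
have close : dist1 (p (sval g t) - p (sval g (nth_rat R n))) < dl / 2.
  by rewrite -dist1N opprB; exact: (le_lt_trans (p_dist1 _ _) (hd _ hn1)).
have dl2 : 0 < dl / 2 by lra.
have [w1' w2'] : dl / 2 <= p (sval g (nth_rat R n)) /\
                 p (sval g (nth_rat R n)) <= 1 - dl / 2 by split; lra.
by move: (ltr_norm_dist1 dl2 y0 y1 w1' w2' close); rewrite ltr_norml => /andP[]; lra.
Qed.

Lemma measurable_coord_ev :
  measurable_fun setT (fun z : R * Gamma T => p (ev z.1 z.2)).
Proof.
apply: (measurability _ (RGenOInfty.measurableE R)) => //.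
move=> _ [_ [a ->] <-]; rewrite setTI.
have [a0|a0] := ltP a 0.
  rewrite (_ : _ @^-1` _ = setT) //; apply/seteqP; split => // z _ /=.
  rewrite in_itv /= andbT; apply: (lt_le_trans a0).
  by have [/(_ z.1)/p_Qdom[]] := proj2_sig z.2.
rewrite (_ : _ @^-1` _ = \bigcup_k \bigcup_m \bigcap_n
   ((~` ball (nth_rat R n) m.+1%:R^-1 `*` setT) `|`
    (setT `*` (ev (nth_rat R n) @^-1` band a k)))); last first.
  apply/seteqP; split => [[t g]|[t g] [k _ [m _ hn]]] /=; rewrite in_itv /= andbT.
  - move=> /(gt_coord_band a0)[k [m hkm]]; exists k => //; exists m => // n _ /=.
    have [h|h] := pselect (ball (nth_rat R n) m.+1%:R^-1 t); last by left.
    by right; split => //; apply: hkm; rewrite -ball_normE /= in h.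
  - apply: (band_gt_coord (k := k) (m := m) a0) => n hnm.
    have [[/= nball _]|[_ //]] := hn n I.
    by exfalso; apply: nball; rewrite -ball_normE.
apply: bigcupT_measurable => k; apply: bigcupT_measurable => m.
apply: bigcapT_measurable => n; apply: measurableU; apply: measurableX => //.
- by apply: measurableC; exact: open_measurable (ball_open _ _).
- by rewrite -[X in measurable X]setTI; apply: measurable_ev => //; exact: measurable_band.
Qed.

End coordinate.

Lemma measurable_ev_pair : measurable_fun setT (fun z : R * Gamma T => ev z.1 z.2).
Proof.
apply/measurable_fun_pairP; split.
- apply: (@measurable_coord_ev fst) => //.
  + by move=> [x y] [/=]; rewrite in_itv /= => /andP[].
  + by move=> x y; rewrite /tdist le_max lexx.
- apply: (@measurable_coord_ev snd) => //.
  + by move=> [x y] [_ /=]; rewrite in_itv /= => /andP[].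
  + by move=> x y; rewrite /tdist le_max lexx orbT.
Qed.

End measurable_evaluation.

Lemma measurable_fun_pair2_setX d1 d2 d3 (T1 : measurableType d1)
    (T2 : measurableType d2) (T3 : measurableType d3)
    (D1 : set T1) (D2 : set T2) (f : T1 * T2 -> T3) (x : T1) :
  measurable D1 -> measurable D2 -> D1 x -> measurable_fun (D1 `*` D2) f ->
  measurable_fun D2 (fun y => f (x, y)).
Proof.
move=> mD1 mD2 D1x mf _ B mB.
rewrite (_ : _ `&` _ = xsection ((D1 `*` D2) `&` f @^-1` B) x).
  by apply: measurable_xsection; exact: (mf (measurableX mD1 mD2) B mB).
by apply/seteqP; split => y; rewrite /xsection /= in_setE /= => -[] //; case.
Qed.

Section integral_facts.
Local Open Scope ereal_scope.
Context {d} {X : measurableType d} {R : realType} (mu : {measure set X -> \bar R}).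

Lemma ge0_le_integral_nomeas {D : set X} {f g : X -> \bar R} :
  (forall x, D x -> 0 <= f x) -> (forall x, D x -> f x <= g x) ->
  \int[mu]_(x in D) f x <= \int[mu]_(x in D) g x.
Proof.
move=> f0 fg.
have g0 x : D x -> 0 <= g x by move=> Dx; exact: le_trans (f0 _ Dx) (fg _ Dx).
rewrite !ge0_integralE //; apply: ereal_sup_le => _ [h hh <-]; exists h => //= x.
apply: (le_trans (hh x)); rewrite /patch; case: ifPn => // /set_mem; exact: fg.
Qed.

Lemma null_set_integral_nomeas {D : set X} {f : X -> \bar R} :
  measurable D -> mu D = 0 -> \int[mu]_(x in D) f x = 0.
Proof.
move=> mD D0.
have ge0_int0 (g : X -> \bar R) : (forall x, 0 <= g x) -> \int[mu]_(x in D) g x = 0.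
  move=> g0; apply/eqP; rewrite eq_le integral_ge0 // andbT.
  apply: (le_trans (@ge0_le_integral_nomeas D g (cst +oo) _ _)) => //.
    by move=> x _; rewrite leey.
  by rewrite integral_cst // D0 mule0.
by rewrite integralE !ge0_int0 ?subee.
Qed.

Lemma ge0_integral_eq0P {D : set X} {f : X -> \bar R} :
  measurable D -> measurable_fun D f -> (forall x, D x -> 0 <= f x) ->
  \int[mu]_(x in D) f x = 0 <-> mu (D `&` [set x | 0 < f x]) = 0.
Proof.
move=> mD mf f0; have mDf := emeasurable_fun_o_infty mD mf 0.
split=> [i0|Df0].
- have : \int[mu]_(x in D) `|f x| = 0.
    by rewrite -i0; apply: eq_integral => x /set_mem Dx; rewrite gee0_abs // f0.
  move/(ae_eq_integral_abs mu mD mf) => [N [mN N0 hN]].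
  apply: (subset_measure0 mDf mN) N0 => x [Dx fx].
  by apply: hN => /= /(_ Dx) hf; move: fx => /=; rewrite hf ltxx.
- rewrite (ge0_negligible_integral mDf mD mf f0 Df0).
  apply: integral0_eq => x [Dx Dfx]; apply/eqP; rewrite eq_le f0 // andbT leNgt.
  by apply/negP => fx; apply: Dfx.
Qed.

Lemma ae_exists_in {D : set X} {P : X -> Prop} : measurable D -> 0 < mu D ->
  {ae mu, forall x, P x} -> exists x, D x /\ P x.
Proof.
move=> mD Dgt0 [N [mN N0 PN]]; apply: contrapT => noD.
suff : mu D = 0 by move=> D0; rewrite D0 ltxx in Dgt0.
apply: (subset_measure0 mD mN) N0 => x Dx; apply: PN => Px.
by apply: noD; exists x.
Qed.

Lemma ae_gt0_integral_eq0_measure0 {D : set X} {f : X -> \bar R} :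
  measurable D -> measurable_fun D f -> {ae mu, forall x, D x -> 0 < f x} ->
  \int[mu]_(x in D) f x = 0 -> mu D = 0.
Proof.
move=> mD mf [N [mN N0 DN]] i0.
have fpos x : D x -> ~ N x -> 0 < f x.
  by move=> Dx Nx; apply: contrapT => fx; apply: Nx; apply: DN => /(_ Dx).
have fneg0 : \int[mu]_(x in D) f^\- x = 0.
  rewrite (ge0_negligible_integral mN mD (measurable_funeneg mf)
    (fun x _ => funeneg_ge0 _ _) N0).
  apply: integral0_eq => x DNx; apply: (ge0_funenegE _ (mem_set DNx)).
  by move=> y [Dy Ny]; exact/ltW/fpos.
have fpos0 : \int[mu]_(x in D) f^\+ x = 0 by move: i0; rewrite integralE fneg0 sube0.
have mDf := emeasurable_fun_o_infty mD (measurable_funepos mf) 0.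
have Df0 := (ge0_integral_eq0P mD (measurable_funepos mf)
  (fun x _ => funepos_ge0 _ _)).1 fpos0.
apply: (subset_measure0 mD (measurableU _ _ mDf mN)) (null_set_setU mDf mN Df0 N0).
move=> x Dx; have [Nx|Nx] := pselect (N x); [by right|left; split => //=].
by rewrite funeposE lt_max fpos.
Qed.

End integral_facts.

Lemma ae_xsection d1 d2 (X1 : measurableType d1) (X2 : measurableType d2)
    (R : realType) (m1 : {measure set X1 -> \bar R})
    (m2 : {sigma_finite_measure set X2 -> \bar R}) (P : X1 * X2 -> Prop) :
  {ae (m1 \x m2)%E, forall z, P z} -> {ae m1, forall x, {ae m2, forall y, P (x, y)}}.
Proof.
move=> [N [mN N0 PN]].
have mNx := measurable_fun_xsection m2 mN.
exists [set x | (0 < m2 (xsection N x))%E]; split.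
- by rewrite -[X in measurable X]setTI; exact: emeasurable_fun_o_infty.
- have := ge0_integral_eq0P m1 measurableT mNx (fun _ _ => measure_ge0 _ _).
  by rewrite setTI => /iffLR; apply.
move=> x /= notae; rewrite lt0e measure_ge0 andbT; apply/negP => /eqP Nx0.
apply: notae; exists (xsection N x); split => //; first exact: measurable_xsection.
by move=> y /= nPy; rewrite /xsection /= inE; exact: PN.
Qed.

(* [leb2] is a definition, so the instances of product measures have to be
   redeclared for it. *)
HB.instance Definition _ (R : realType) := Measure.on (@leb2 R).

Lemma leb2_sigma_finite (R : realType) : sigma_finite setT (@leb2 R).
Proof.
have /sigma_finiteP[F [TF ndF Foo]] := sigma_finiteT (@lebesgue_measure R).
exists (fun n => F n `*` F n).
  rewrite -setXTT TF predeqE => -[x y]; split.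
    move=> [/= [n _ Fnx] [k _ Fky]]; exists (maxn n k) => //; split.
    - by move: x Fnx; exact/subsetPset/ndF/leq_maxl.
    - by move: y Fky; exact/subsetPset/ndF/leq_maxr.
  by move=> [n _ []/= ? ?]; split; exists n.
move=> k; have [? ?] := Foo k; split; first exact: measurableX.
by rewrite /leb2 product_measure1E // lte_mul_pinfty // ?ge0_fin_numE ?measure_ge0.
Qed.

HB.instance Definition _ (R : realType) :=
  Measure_isSigmaFinite.Build _ _ _ (@leb2 R) (@leb2_sigma_finite R).

Section occupation.
Local Open Scope ereal_scope.
Variables (R : realType) (T : R).
Hypothesis T_gt0 : (0 < T)%R.
Variable A : set (R * R).
Hypothesis mA : measurable A.

Definition occupation : set (measurableTypeR R * Gamma T) :=
  [set z | (0 <= z.1 <= T)%R /\ A (ev z.1 z.2)].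

Lemma measurable_occupation : measurable occupation.
Proof.
rewrite (_ : occupation = (`[0%R, T] `*` setT) `&`
                          (setT `&` (fun z => ev z.1 z.2) @^-1` A)).
  apply: measurableI; first by apply: measurableX => //; exact: measurable_itv.
  exact: measurable_ev_pair.
by apply/seteqP; split => z; rewrite /occupation /= in_itv /=;
  [move=> [h1 h2]|move=> [[h1 _] [_ h2]]].
Qed.

Lemma xsection_occupation t :
  xsection occupation t = if (0 <= t <= T)%R then ev t @^-1` A else set0.
Proof.
rewrite /xsection /occupation; case: ifPn => t0T;
  apply/seteqP; split => g /=; rewrite ?in_setE //=.
- by case.
- by case=> t0T'; rewrite t0T' in t0T.
Qed.

Lemma Gamma_AE :
  @Gamma_A R T A = [set g | 0 < lebesgue_measure (ysection occupation g)].
Proof.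
apply/funext => g; rewrite /Gamma_A /=; congr (_ < lebesgue_measure _).
by apply/seteqP; split => s; rewrite /ysection /= in_setE.
Qed.

Variable eta : {finite_measure set Gamma T -> \bar R}.

Lemma Gamma_A_eq0P : eta (@Gamma_A R T A) = 0 <->
  lebesgue_measure [set t | 0 < eta (xsection occupation t)] = 0.
Proof.
have mS := measurable_occupation.
have := ge0_integral_eq0P eta measurableT
  (measurable_fun_ysection lebesgue_measure mS) (fun _ _ => measure_ge0 _ _).
have := ge0_integral_eq0P lebesgue_measure measurableT
  (measurable_fun_xsection eta mS) (fun _ _ => measure_ge0 _ _).
rewrite !setTI Gamma_AE => <- <-.
have := indic_fubini_tonelli lebesgue_measure eta mS.
rewrite (indic_fubini_tonelli_FE eta mS) (indic_fubini_tonelli_GE lebesgue_measure mS).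
by move=> ->.
Qed.

Variable rho : R * (R * R) -> R.
Hypothesis A_Qdom : A `<=` @Qdom R.
Hypothesis eta_marginal : forall t, (0 <= t <= T)%R ->
  forall B : set (R * R), measurable B ->
  eta (@ev R T t @^-1` B) = \int[@leb2 R]_(x in B `&` @Qdom R) (rho (t, x))%:E.

Lemma eta_xsection_occupation t : (0 <= t <= T)%R ->
  eta (xsection occupation t) = \int[@leb2 R]_(x in A) (rho (t, x))%:E.
Proof. by move=> t0T; rewrite xsection_occupation t0T eta_marginal // setIidl. Qed.

Lemma eta_Gamma_A_eq0 : @leb2 R A = 0 -> eta (@Gamma_A R T A) = 0.
Proof.
move=> A0; apply/Gamma_A_eq0P.
rewrite (_ : [set t | _] = set0) ?measure0 //; apply/seteqP; split => t //=.
have [t0T|t0T] := boolP (0 <= t <= T)%R; last first.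
  by rewrite xsection_occupation (negbTE t0T) measure0 ltxx.
by rewrite eta_xsection_occupation // null_set_integral_nomeas // ltxx.
Qed.

Hypothesis rho_measurable : measurable_fun (`]0%R, T[ `*` @Qdom R) rho.
Hypothesis rho_gt0 :
  {ae @leb3 R, forall z, (`]0%R, T[ `*` @Qdom R) z -> (0 < rho z)%R}.

Lemma leb2_A_eq0 : eta (@Gamma_A R T A) = 0 -> @leb2 R A = 0.
Proof.
move=> /Gamma_A_eq0P F0.
have F0ae : {ae lebesgue_measure, forall t, ~ 0 < eta (xsection occupation t)}.
  exists [set t | 0 < eta (xsection occupation t)]; split => //; last first.
    by move=> t /= /contrapT.
  rewrite -[X in measurable X]setTI; apply: emeasurable_fun_o_infty => //.
  exact: measurable_fun_xsection measurable_occupation.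
have itv_gt0 : 0 < lebesgue_measure `]0%R, T[%classic.
  by rewrite lebesgue_measure_itv /= lte_fin T_gt0 oppr0 adde0 lte_fin.
have [|t [/= t0T [Ft rho_t_gt0]]] := ae_exists_in _ itv_gt0
  (filterS2 _ (fun t a b => conj a b) F0ae (ae_xsection rho_gt0)).
  exact: measurable_itv.
move: (t0T); rewrite in_itv /= => /andP[t_gt0 t_ltT].
have mQ : measurable (@Qdom R) by apply: measurableX; exact: measurable_itv.
apply: (ae_gt0_integral_eq0_measure0 (mu := @leb2 R) (f := fun x => (rho (t, x))%:E) mA).
- apply/measurable_EFinP; apply: (measurable_funS mQ A_Qdom).
  exact: (measurable_fun_pair2_setX (measurable_itv _) mQ t0T rho_measurable).
- apply: filterS rho_t_gt0 => x rho_x Ax; rewrite lte_fin.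
  by apply: rho_x; split => //; exact: A_Qdom.
- rewrite -eta_xsection_occupation; last by rewrite ltW // ltW.
  by apply/eqP; rewrite eq_le leNgt measure_ge0 andbT; exact/negP.
Qed.

End occupation.

Theorem mainTheorem8 (R : realType) (T : R) (hT : 0 < T)
  (b : R * R -> R * R)
  (hb_meas : measurable_fun (@Qdom R) b)
  (hb_bdd : exists M : R, forall x, @Qdom R x -> `|(b x).1| <= M /\ `|(b x).2| <= M)
  (hb_BV : BV_torus b)
  (rho : R * (R * R) -> R)
  (hrho : ln_Linfty T rho)
  (hce : continuity_eq T b rho)
  (eta : {finite_measure set (Gamma T) -> \bar R})
  (hconc : exists N : set (Gamma T), measurable N /\ eta N = 0%E /\
             forall g : Gamma T, ~ N g -> integral_curve T b (sval g))
  (hmarg : forall t : R, 0 <= t <= T -> forall B : set (R * R), measurable B ->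
             eta (@ev R T t @^-1` B) =
             (\int[@leb2 R]_(x in B `&` @Qdom R) (rho (t, x))%:E)%E)
  (A : set (R * R)) (hA_meas : measurable A) (hA : A `<=` @Qdom R) :
  @leb2 R A = 0%E <-> eta (@Gamma_A R T A) = 0%E.
Proof.
have [rho_meas [C rho_bdd]] := hrho.
have rho_gt0 : {ae @leb3 R, forall z, (`]0%R, T[ `*` @Qdom R) z -> 0 < rho z}.
  have [N [mN N0 rhoN]] := rho_bdd; exists N; split => // z /= rho_z_le0.
  by apply: rhoN => /= rho_z; apply: rho_z_le0 => /rho_z[].
split; first exact: (eta_Gamma_A_eq0 hT hA_meas hA hmarg).
exact: (leb2_A_eq0 hT hA_meas hA hmarg rho_meas rho_gt0).
Qed.
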